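(* Fix $n$. If $K_{s_1}^{t_1}$ and $K_{s_2}^{t_2}$ are graphs with $2\le t_i\le s_i$ and $s_1+t_1=s_2+t_2=n$ that are $D$-cospectral, then they are isomorphic. That is, no two non-isomorphic graphs in $\mathbb{K}_{s}^{t}=\{K_{s}^{t}\mid 2\leq t\leq s,\ s+t=n\}$ are $D$-cospectral.
   Context: Two connected graphs are $D$-cospectral if their distance matrices have the same spectrum. $K_{s}^{t}$ denotes the graph on $s+t$ vertices obtained from the complete graph $K_s$ by attaching a pendant edge (a new vertex of degree 1) to each of $t$ distinct vertices of $K_s$. *)

From HB Require Import structures.
From mathcomp Require Import all_boot all_order all_algebra all_fingroup.
Set Implicit Arguments. Unset Strict Implicit. Unset Printing Implicit Defensive.
Import Order.TTheory GRing.Theory Num.Theory.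

(* A simple graph on a finite vertex type T is given by its adjacency relation
   (assumed symmetric and irreflexive; the graphs below are). *)

Fixpoint reach (T : finType) (e : rel T) (k : nat) (x y : T) : bool :=
  match k with
  | 0 => x == y
  | k'.+1 => reach e k' x y || [exists z, e x z && reach e k' z y]
  end.

(* Graph distance: the least k such that y is reachable from x by a walk of
   length <= k (for connected graphs any such distance is < #|T|). *)
Definition gdist (T : finType) (e : rel T) (x y : T) : nat :=
  find (fun k => reach e k x y) (iota 0 #|T|).

Definition distmx (n : nat) (e : rel 'I_n) : 'M[int]_n :=
  \matrix_(i, j) Posz (gdist e i j).

(* D-cospectral: distance matrices have the same spectrum, i.e. the same
   characteristic polynomial (spectrum counted with multiplicities). *)
Definition D_cospectral (n : nat) (e1 e2 : rel 'I_n) : Prop :=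
  char_poly (distmx e1) = char_poly (distmx e2).

Definition graph_iso (n : nat) (e1 e2 : rel 'I_n) : Prop :=
  exists f : {perm 'I_n}, forall x y, e1 x y = e2 (f x) (f y).

(* K_s^t on vertex set 'I_n (intended n = s + t): vertices 0..s-1 form the
   clique K_s, and vertex s + k (k < t) is a pendant vertex attached to k. *)
Definition pend (s t : nat) (i j : nat) : bool := (s <= i < s + t) && (j == i - s).

Definition Kst (s t n : nat) : rel 'I_n :=
  fun i j => (i != j) &&
    [|| ((i < s) && (j < s)), pend s t i j | pend s t j i].
Arguments Kst s t n : clear implicits.

(** Since the two graphs have the same number of vertices, it suffices to
    recover [s] from the spectrum.  The distance matrix [D] of [K_s^t] has
    diameter 3 and its distances are explicit, so the spectral invariant
    [tr (D^2)], the sum of the squared distances, equals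
    [s^2 + 8st + 9t^2 - s - 15t].  With [t = n - s] this is
    [2s^2 - (10n - 14)s + 9n^2 - 15n], strictly decreasing in [s] for
    [s <= n - 1], hence it determines [s]. *)
From HB Require Import structures.
From mathcomp Require Import all_boot all_order all_algebra all_fingroup.
From mathcomp Require Import zify.
Import GRing.Theory.

Set Implicit Arguments.
Unset Strict Implicit.
Unset Printing Implicit Defensive.

Section ReachByDistance.
Variables (T : finType) (e : rel T) (d : T -> T -> nat).
Hypothesis d_eq0 : forall x y, (d x y == 0) = (x == y).
Hypothesis d_edge : forall x y z, e x z -> d x y <= (d z y).+1.
Hypothesis d_step : forall x y, x != y -> exists2 z, e x z & d x y = (d z y).+1.

Lemma reach_leq k x y : reach e k x y = (d x y <= k).
Proof.
elim: k x => [|k IHk] x /=; first by rewrite leqn0 d_eq0.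
rewrite IHk; apply/idP/idP.
  case/orP => [/leqW // | /existsP[z /andP[exz]]].
  by rewrite IHk => dzy; have := @d_edge x y z exz; lia.
rewrite leq_eqVlt ltnS => /orP[/eqP dxy | -> //].
have [z exz dxyz] : exists2 z, e x z & d x y = (d z y).+1.
  by apply: d_step; rewrite -d_eq0 dxy.
apply/orP; right; apply/existsP; exists z.
by rewrite exz IHk; lia.
Qed.

Lemma find_leq_iota a m k : a <= k < a + m ->
  find (fun i => k <= i) (iota a m) = k - a.
Proof.
elim: m a => [|m IHm] a /=; first lia.
by case: (leqP k a) => [ka _ | ak km]; [lia | rewrite IHm; lia].
Qed.

Lemma gdist_eq x y : d x y < #|T| -> gdist e x y = d x y.
Proof.
move=> dxyT; rewrite /gdist (eq_find (a2 := fun k => d x y <= k)).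
  by rewrite find_leq_iota ?subn0.
by move=> k; exact: reach_leq.
Qed.

End ReachByDistance.

Lemma sum_nat_if_eq a b c x y :
  \sum_(a <= j < b) (if j == c then x else y) + (a <= c < b) * y =
  (b - a) * y + (a <= c < b) * x.
Proof.
elim: b => [|b IHb]; first by rewrite big_geq // andbF.
have [ab | ba] := leqP a b; last first.
  have c_out : (a <= c < b.+1) = false by apply/negbTE; lia.
  by rewrite big_geq // c_out; lia.
rewrite big_nat_recr //= addnAC; move: IHb.
by case: eqP => [<-|]; case: (boolP (a <= c < b)); case: (boolP (a <= c < b.+1)); nia.
Qed.

Lemma sum_nat_add_const m n c a (F : nat -> nat) :
  (forall i, m <= i < n -> F i + c = a) ->
  \sum_(m <= i < n) F i + (n - m) * c = (n - m) * a.
Proof.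
by move=> Fc; rewrite -!sum_nat_const_nat -big_split; apply: eq_big_nat.
Qed.

Definition kst_adj (s i j : nat) : bool :=
  (i != j) && [|| (i < s) && (j < s), i == j + s | j == i + s].

Definition kst_dist (s i j : nat) : nat :=
  if i == j then 0 else
  if (i < s) && (j < s) then 1 else
  if i < s then (if j == i + s then 1 else 2) else
  if j < s then (if i == j + s then 1 else 2) else 3.

Ltac kst_cases := rewrite /kst_dist /kst_adj; repeat (case: ifP => ?); lia.

Lemma Kst_adjE s t n (x y : 'I_n) : n = s + t -> Kst s t n x y = kst_adj s x y.
Proof.
move=> nE; have := ltn_ord x; have := ltn_ord y.
rewrite /Kst /kst_adj /pend -val_eqE /=; lia.
Qed.

Lemma kst_dist_eq0 s i j : (kst_dist s i j == 0) = (i == j).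
Proof. kst_cases. Qed.

Lemma kst_dist_sym s i j : kst_dist s i j = kst_dist s j i.
Proof. kst_cases. Qed.

Lemma kst_dist_le3 s i j : kst_dist s i j <= 3.
Proof. kst_cases. Qed.

Section KstDistance.
Variables s t : nat.
Hypothesis le_ts : t <= s.

Lemma kst_dist_edge i j z : i < s + t -> j < s + t -> z < s + t ->
  kst_adj s i z -> kst_dist s i j <= (kst_dist s z j).+1.
Proof. kst_cases. Qed.

Lemma kst_dist_step i j : i < s + t -> j < s + t -> i != j ->
  exists2 z, z < s + t & kst_adj s i z && (kst_dist s i j == (kst_dist s z j).+1).
Proof.
move=> ist jst ij; case adj_ij: (kst_adj s i j).
  by exists j => //; rewrite adj_ij; move: adj_ij; kst_cases.
have [is_ | si] := ltnP i s.
  by exists (j - s); [lia | move: adj_ij; kst_cases].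
by exists (i - s); [lia | move: adj_ij; kst_cases].
Qed.

Lemma gdist_Kst n (x y : 'I_n) : n = s + t -> 3 < n ->
  gdist (Kst s t n) x y = kst_dist s x y.
Proof.
move=> nE n3; apply: (@gdist_eq _ _ (fun u v : 'I_n => kst_dist s u v)).
- by move=> u v; rewrite kst_dist_eq0.
- by move=> u v w; rewrite Kst_adjE //; apply: kst_dist_edge; rewrite -nE.
- move=> u v uv.
  have [ust vst] : u < s + t /\ v < s + t by rewrite -nE.
  have [z zst /andP[adj /eqP dE]] := kst_dist_step ust vst uv.
  have zn : z < n by rewrite nE.
  by exists (Ordinal zn); rewrite // Kst_adjE.
- by rewrite card_ord; have := kst_dist_le3 s x y; lia.
Qed.

Definition kst_sqdist_sum (s t : nat) : nat :=
  \sum_(0 <= i < s + t) \sum_(0 <= j < s + t) kst_dist s i j ^ 2.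

Lemma kst_row_clique i : i < s ->
  \sum_(0 <= j < s + t) kst_dist s i j ^ 2 + 1 + 3 * (i < t) = s + 4 * t.
Proof.
move=> is_; rewrite (big_cat_nat _ (n := s)) //= ?leq_addr //.
rewrite (eq_big_nat _ _ (F2 := fun j => if j == i then 0 else 1)); last first.
  by move=> j jlt; kst_cases.
rewrite (eq_big_nat _ _ (F2 := fun j => if j == i + s then 1 else 4) (m := s)); last first.
  by move=> j jlt; kst_cases.
have := sum_nat_if_eq 0 s i 0 1; have := sum_nat_if_eq s (s + t) (i + s) 1 4.
case: (boolP (i < t)); nia.
Qed.

Lemma kst_row_pendant i : s <= i < s + t ->
  \sum_(0 <= j < s + t) kst_dist s i j ^ 2 + 12 = 4 * s + 9 * t.
Proof.
move=> ist; rewrite (big_cat_nat _ (n := s)) //= ?leq_addr //.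
rewrite (eq_big_nat _ _ (F2 := fun j => if j == i - s then 1 else 4)); last first.
  by move=> j jlt; kst_cases.
rewrite (eq_big_nat _ _ (F2 := fun j => if j == i then 0 else 9) (m := s)); last first.
  by move=> j jlt; kst_cases.
have := sum_nat_if_eq 0 s (i - s) 1 4; have := sum_nat_if_eq s (s + t) i 0 9.
nia.
Qed.

Lemma kst_sqdist_sumE :
  kst_sqdist_sum s t + s + 15 * t = s * s + 8 * s * t + 9 * t * t.
Proof.
rewrite /kst_sqdist_sum (big_cat_nat _ (n := s)) ?leq_addr //=.
rewrite (big_cat_nat _ (n := t) (p := s)) //=.
set row := fun i => \sum_(0 <= j < s + t) kst_dist s i j ^ 2.
have low : \sum_(0 <= i < t) row i + (t - 0) * 4 = (t - 0) * (s + 4 * t).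
  apply: sum_nat_add_const => i /andP[_ it].
  by have := kst_row_clique (leq_trans it le_ts); rewrite /row it; lia.
have high : \sum_(t <= i < s) row i + (s - t) * 1 = (s - t) * (s + 4 * t).
  apply: sum_nat_add_const => i /andP[ti is_].
  by have := kst_row_clique is_; rewrite /row ltnNge ti; lia.
have pendants : \sum_(s <= i < s + t) row i + (s + t - s) * 12 =
                (s + t - s) * (4 * s + 9 * t).
  exact: sum_nat_add_const kst_row_pendant.
move: low high pendants; rewrite subn0 addKn.
move: (\sum_(0 <= i < t) _) (\sum_(t <= i < s) _) (\sum_(s <= i < s + t) _) => A B C.
clear row; rewrite -(subnKC le_ts); move: (s - t) => k.
rewrite addKn; nia.
Qed.

End KstDistance.

Lemma kst_sqdist_sum_inj s1 t1 s2 t2 : 0 < t1 <= s1 -> 0 < t2 <= s2 ->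
  s1 + t1 = s2 + t2 -> kst_sqdist_sum s1 t1 = kst_sqdist_sum s2 t2 -> s1 = s2.
Proof.
wlog le_s12 : s1 t1 s2 t2 / s1 <= s2.
  move=> gen h1 h2 n12 f12; have [le_s12 | /ltnW le_s21] := leqP s1 s2.
    exact: gen le_s12 h1 h2 n12 f12.
  exact/esym/(gen _ _ _ _ le_s21 h2 h1 (esym n12) (esym f12)).
move=> /andP[t1_gt0 le_ts1] /andP[t2_gt0 le_ts2] n12 f12.
have := kst_sqdist_sumE le_ts1; have := kst_sqdist_sumE le_ts2; rewrite f12.
rewrite -(subnKC le_s12) in n12 *; move: (s2 - s1) n12 => d n12.
have -> : t1 = t2 + d by lia.
case: d {n12} => [|d]; first by rewrite addn0.
nia.
Qed.

Local Open Scope ring_scope.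

Section CharPolySquare.
Variables (R : comNzRingType) (n : nat).

Lemma map_char_poly_mx_comp (q : {poly R}) (A : 'M[R]_n) :
  map_mx (comp_poly q) (char_poly_mx A) = q%:M - map_mx polyC A.
Proof.
apply/matrixP => i j; rewrite !mxE comp_polyB comp_polyC.
by case: (i == j); rewrite ?mulr1n ?mulr0n ?comp_polyX ?comp_poly0.
Qed.

(* [X^2 - A^2 = (X - A)(X + A)], evaluated through determinants. *)
Lemma char_poly_sqr_compX2 (A : 'M[R]_n) :
  char_poly (A *m A) \Po 'X^2 = (-1) ^+ n * (char_poly A * (char_poly A \Po - 'X)).
Proof.
rewrite /char_poly -!det_map_mx !map_char_poly_mx_comp map_mxM.
set Ac := map_mx polyC A.
have -> : ('X^2)%:M - Ac *m Ac = ('X%:M - Ac) *m ('X%:M + Ac).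
  by rewrite mulmxDr !mulmxBl -scalar_mxM scalar_mxC addrA subrK expr2.
have -> : (- 'X)%:M - Ac = (-1) *: ('X%:M + Ac) by rewrite scaleN1r opprD raddfN.
by rewrite det_mulmx detZ mulrCA (mulrA ((-1) ^+ n)) -expr2 sqrr_sign mul1r.
Qed.

Lemma char_poly_sqr (A B : 'M[R]_n) :
  char_poly A = char_poly B -> char_poly (A *m A) = char_poly (B *m B).
Proof.
move=> AB; have := char_poly_sqr_compX2 A; rewrite AB -char_poly_sqr_compX2.
move=> sqrAB; apply/polyP => i.
have := congr1 (fun p : {poly R} => p`_(i * 2)%N) sqrAB.
by rewrite /= !coef_comp_poly_Xn // dvdn_mull // mulnK.
Qed.

Lemma mxtrace_char_poly (A B : 'M[R]_n) : char_poly A = char_poly B -> \tr A = \tr B.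
Proof.
case: n A B => [|m] A B AB; first by rewrite /mxtrace !big_ord0.
by apply: oppr_inj; rewrite -!char_poly_trace // AB.
Qed.

End CharPolySquare.

Lemma mxtrace_distmx_Kst_sqr s t n : (t <= s)%N -> n = (s + t)%N -> (3 < n)%N ->
  \tr (distmx (Kst s t n) *m distmx (Kst s t n)) = (kst_sqdist_sum s t)%:Z.
Proof.
move=> le_ts nE n3; rewrite /kst_sqdist_sum -nE big_mkord.
rewrite (@big_morph _ _ Posz 0 +%R 0%N addn PoszD erefl); apply: eq_bigr => i _.
rewrite big_mkord (@big_morph _ _ Posz 0 +%R 0%N addn PoszD erefl) mxE.
apply: eq_bigr => j _.
by rewrite !mxE !gdist_Kst // [kst_dist s j i]kst_dist_sym -PoszM expnS expn1.
Qed.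

Theorem theorem3p3 (n s1 t1 s2 t2 : nat) :
  (2 <= t1 <= s1)%N -> (2 <= t2 <= s2)%N ->
  (s1 + t1 = n)%N -> (s2 + t2 = n)%N ->
  D_cospectral (Kst s1 t1 n) (Kst s2 t2 n) ->
  graph_iso (Kst s1 t1 n) (Kst s2 t2 n).
Proof.
move=> /andP[t1_ge2 le_ts1] /andP[t2_ge2 le_ts2] n1 n2 cospectral.
have n_gt3 : (3 < n)%N by lia.
have := mxtrace_char_poly (char_poly_sqr cospectral).
rewrite !mxtrace_distmx_Kst_sqr //; case=> sqdist12.
have s12 : s1 = s2.
  by apply: (kst_sqdist_sum_inj _ _ _ sqdist12); lia.
have t12 : t1 = t2 by lia.
by subst s2 t2; exists 1%g => x y; rewrite !perm1.
Qed.
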